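(* Let $\operatorname{Hank}_n(\mathbb{C})$ be the space of $n\times n$ complex Hankel matrices. Let $\mu_h\in\operatorname{Hank}_n(\mathbb{C})^*\otimes(\mathbb{C}^n)^*\otimes\mathbb{C}^n$ be the structure tensor of the Hankel matrix-vector product $(H,v)\mapsto Hv$. Then $\operatorname{rank}(\mu_h)=\underline{\operatorname{rank}}(\mu_h)=2n-1$. Moreover, let $\mu_H\in\operatorname{Hank}_n(\mathbb{C})^*\otimes\operatorname{Hank}_n(\mathbb{C})^*\otimes\mathbb{C}^{n\times n}$ be the structure tensor of the Hankel matrix-Hankel matrix product $(H,K)\mapsto HK$. Then $\operatorname{rank}(\mu_H)\le n(2n-1)$.
   Context: A Hankel matrix is a square matrix whose $(i,j)$ entry depends only on $i+j$. Structure tensor of a bilinear map $\beta:U\times V\to W$: the unique $\mu_\beta\in U^*\otimes V^*\otimes W$ with $\beta(u,v)=\mu_\beta(u,v,\cdot)$. Rank: least number of decomposable tensors summing to the tensor; border rank: least $r$ such that it is a limit of tensors of rank at most $r$. *)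

From Stdlib Require Import Reals Arith.

Definition C : Type := (R * R)%type.
Definition C0 : C := (0%R, 0%R).
Definition C1 : C := (1%R, 0%R).
Definition Cadd (x y : C) : C := (fst x + fst y, snd x + snd y)%R.
Definition Copp (x : C) : C := (- fst x, - snd x)%R.
Definition Cmul (x y : C) : C :=
  (fst x * fst y - snd x * snd y, fst x * snd y + snd x * fst y)%R.
Definition Cmod (x : C) : R := sqrt (fst x * fst x + snd x * snd x)%R.

Fixpoint Csum (r : nat) (f : nat -> C) : C :=
  match r with
  | O => C0
  | S r' => Cadd (Csum r' f) (f r')
  end.

(** A tensor in dual(U) (x) dual(V) (x) W, with dim U = da, dim V = db, dim W = dc,
    is given by its coordinate array [T a b c] (a < da, b < db, c < dc)
    with respect to fixed bases (dual bases on dual(U), dual(V)). *)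
Definition tensor := nat -> nat -> nat -> C.

Definition rank_le (da db dc : nat) (T : tensor) (r : nat) : Prop :=
  exists (x y z : nat -> nat -> C),
    forall a b c, (a < da)%nat -> (b < db)%nat -> (c < dc)%nat ->
      T a b c = Csum r (fun l => Cmul (Cmul (x l a) (y l b)) (z l c)).

Definition is_rank (da db dc : nat) (T : tensor) (r : nat) : Prop :=
  rank_le da db dc T r /\ (forall s, rank_le da db dc T s -> (r <= s)%nat).

Definition tensor_cv (da db dc : nat) (Tm : nat -> tensor) (T : tensor) : Prop :=
  forall a b c, (a < da)%nat -> (b < db)%nat -> (c < dc)%nat ->
    forall eps : R, (eps > 0)%R -> exists N : nat, forall m : nat, (m >= N)%nat ->
      (Cmod (Cadd (Tm m a b c) (Copp (T a b c))) < eps)%R.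

Definition border_rank_le (da db dc : nat) (T : tensor) (r : nat) : Prop :=
  exists Tm : nat -> tensor,
    (forall m, rank_le da db dc (Tm m) r) /\ tensor_cv da db dc Tm T.

Definition is_border_rank (da db dc : nat) (T : tensor) (r : nat) : Prop :=
  border_rank_le da db dc T r /\
  (forall s, border_rank_le da db dc T s -> (r <= s)%nat).

Definition std_basis (a : nat) : nat -> C :=
  fun k => if Nat.eqb k a then C1 else C0.

Definition structure_tensor (beta : (nat -> C) -> (nat -> C) -> (nat -> C)) : tensor :=
  fun a b c => beta (std_basis a) (std_basis b) c.

(** * Hankel matrices.
    Hank_n(C) is identified with C^(2n-1) via h |-> (h_(i+j))_(i,j<n);
    this is a linear isomorphism onto the space of n x n Hankel matrices. *)
Definition hankel (h : nat -> C) : nat -> nat -> C := fun i j => h (i + j)%nat.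

Definition hankel_vec_prod (n : nat) (h v : nat -> C) : nat -> C :=
  fun i => Csum n (fun j => Cmul (hankel h i j) (v j)).

(** Hankel matrix-matrix product (H, K) |-> HK, valued in C^(n x n),
    flattened row-major: entry (i,j) has index i*n + j. *)
Definition hankel_mat_prod (n : nat) (h k : nat -> C) : nat -> C :=
  fun c => Csum n (fun l => Cmul (hankel h (Nat.div c n) l) (hankel k l (Nat.modulo c n))).

Definition mu_h (n : nat) : tensor := structure_tensor (hankel_vec_prod n).
Definition mu_H (n : nat) : tensor := structure_tensor (hankel_mat_prod n).

From Pilot Require Import Defs.
From Stdlib Require Import Reals Arith.

From HB Require structures.
From mathcomp Require all_boot all_order all_algebra.
From mathcomp Require Rstruct complex zify ring.

(* Upper bounds (Toom-Cook): since [mu_h(a,b,c) = [b + c = a]], evaluating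
   at 2n-1 distinct points t_l and interpolating with the dual basis of the
   Vandermonde matrix writes [mu_h] as the sum over l of
   w_l (x) (t_l^b)_b (x) (t_l^c)_c.  Row i of a product HK only involves the
   Hankel window h_i, ..., h_(i+n-1), so [mu_H] is the sum over i of n shifted
   copies of this decomposition.
   Lower bound: the flattening (a, k) |-> T(a, min(k, n-1), k - min(k, n-1))
   of [mu_h] is the (2n-1) x (2n-1) identity, and the flattening of a tensor
   of rank s has matrix rank at most s.  A rank-s tensor close enough to
   [mu_h] has a diagonally dominant flattening, hence of full rank 2n-1. *)

Module HankelRank.
Import structures all_boot all_order all_algebra Rstruct complex zify ring.
Import Order.TTheory GRing.Theory Num.Theory.
Local Open Scope ring_scope.
Set Implicit Arguments.
Unset Strict Implicit.

Section TensorRank.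
Variable F : nzRingType.

Definition tensor_rank_le (da db dc : nat) (T : nat -> nat -> nat -> F)
    (r : nat) : Prop :=
  exists x y z : nat -> nat -> F, forall a b c,
    (a < da)%N -> (b < db)%N -> (c < dc)%N ->
    T a b c = \sum_(l < r) x l a * y l b * z l c.

Lemma tensor_rank_le_add da db dc T1 T2 r1 r2 :
  tensor_rank_le da db dc T1 r1 -> tensor_rank_le da db dc T2 r2 ->
  tensor_rank_le da db dc (fun a b c => T1 a b c + T2 a b c) (r1 + r2).
Proof.
move=> [x1 [y1 [z1 h1]]] [x2 [y2 [z2 h2]]].
pose glue (f1 f2 : nat -> nat -> F) l := if (l < r1)%N then f1 l else f2 (l - r1)%N.
exists (glue x1 x2), (glue y1 y2), (glue z1 z2) => a b c ha hb hc.
rewrite big_split_ord h1 // h2 //; congr (_ + _); apply: eq_bigr => l _.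
  by rewrite /glue /= ltn_ord.
by rewrite /glue /= ltnNge leq_addr /= addKn.
Qed.

Lemma tensor_rank_le_sum da db dc m (T : nat -> nat -> nat -> nat -> F) r :
  (forall i, (i < m)%N -> tensor_rank_le da db dc (T i) r) ->
  tensor_rank_le da db dc (fun a b c => \sum_(i < m) T i a b c) (m * r).
Proof.
elim: m => [|m IH] hT.
  by exists (fun _ _ => 0), (fun _ _ => 0), (fun _ _ => 0) => a b c _ _ _;
    rewrite !big_ord0.
have [|x [y [z h]]] := tensor_rank_le_add (IH _) (hT m (ltnSn m)).
  by move=> i /ltnW; apply: hT.
by exists x, y, z => a b c ha hb hc; rewrite big_ord_recr /= mulSnr h.
Qed.

End TensorRank.

Lemma tensor_rank_le_flattening (F : fieldType) da db dc K
    (beta gamma : 'I_K -> nat) (T : nat -> nat -> nat -> F) s :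
  (forall k, beta k < db)%N -> (forall k, gamma k < dc)%N ->
  tensor_rank_le da db dc T s ->
  (\rank (\matrix_(a < da, k < K) T a (beta k) (gamma k)) <= s)%N.
Proof.
move=> hbeta hgamma [x [y [z hT]]].
pose X : 'M[F]_(da, s) := \matrix_(a, l) x l a.
pose Y : 'M[F]_(s, K) := \matrix_(l, k) (y l (beta k) * z l (gamma k)).
have -> : \matrix_(a < da, k < K) T a (beta k) (gamma k) = X *m Y.
  apply/matrixP => a k; rewrite !mxE hT //.
  by apply: eq_bigr => l _; rewrite !mxE mulrA.
exact: leq_trans (mxrankM_maxl _ _) (rank_leq_col _).
Qed.

Lemma vandermonde_interpolation (F : numFieldType) N :
  exists (w : nat -> nat -> F) (t : nat -> F), forall a b c,
    (a < N.+1)%N -> (b + c < N.+1)%N ->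
    \sum_(l < N.+1) w l a * t l ^+ b * t l ^+ c = (b + c == a)%N%:R.
Proof.
pose t : nat -> F := fun l => l%:R.
pose V : 'M[F]_N.+1 := Vandermonde N.+1 (\row_(l < N.+1) t l).
have V_unit : V \in unitmx.
  rewrite unitmxE det_Vandermonde unitfE; apply/prodf_neq0 => i _.
  apply/prodf_neq0 => j ij; rewrite !mxE subr_eq0 /t eqr_nat.
  by rewrite eq_sym ltn_eqF.
exists (fun l a => invmx V (inord l) (inord a)), t => a b c ha hbc.
have := mulmxV V_unit; move/matrixP => /(_ (inord (b + c)) (inord a)).
rewrite !mxE -val_eqE /= !inordK // => <-.
by apply: eq_bigr => l _; rewrite !mxE inord_val inordK // -mulrA -exprD mulrC.
Qed.

Lemma near_identity_row_free (F : numFieldType) N (A : 'M[F]_N.+1) :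
  (forall i j, `|A i j - (i == j)%:R| <= (2 * N.+1%:R)^-1) -> row_free A.
Proof.
move=> hA; rewrite -kermx_eq0; apply/eqP/row_matrixP => r; rewrite row0.
set u := row r (kermx A).
have uA : u *m A = 0 by apply/sub_kermxP; exact: row_sub.
clearbody u.
set S := \sum_k `|u 0 k|.
(* Each coordinate of u is a combination of all of them with weights at most
   1/(2(N+1)), so the l1 norm S satisfies S <= S/2. *)
have coord_le i : `|u 0 i| <= (2 * N.+1%:R)^-1 * S.
  have -> : u 0 i = - \sum_k u 0 k * (A k i - (k == i)%:R).
    move/matrixP: uA => /(_ 0 i); rewrite !mxE => uAi.
    under eq_bigr do rewrite mulrBr.
    rewrite sumrB uAi sub0r opprK (bigD1 i) //= big1 ?addr0 ?eqxx ?mulr1 //.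
    by move=> k /negbTE ->; rewrite mulr0.
  rewrite normrN mulr_sumr; apply: le_trans (ler_norm_sum _ _ _) _.
  apply: ler_sum => k _; rewrite normrM mulrC.
  by apply: ler_wpM2r; [exact: normr_ge0 | exact: hA].
have S_ge0 : 0 <= S by apply: sumr_ge0 => k _; exact: normr_ge0.
have S_le : S <= S / 2.
  apply: (@le_trans _ _ (\sum_(k < N.+1) (2 * N.+1%:R)^-1 * S)).
    by apply: ler_sum => k _; exact: coord_le.
  rewrite sumr_const card_ord -[_ *+ N.+1]mulr_natl.
  suff -> : N.+1%:R * ((2 * N.+1%:R)^-1 * S) = S / 2 by [].
  by field; rewrite nat1r pnatr_eq0.
have S0 : S = 0.
  apply/eqP; rewrite eq_le S_ge0 andbT.
  by move: S_le; rewrite ler_pdivlMr ?ltr0n // mulr_natr mulr2n gerDl.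
apply/rowP => k; rewrite mxE; apply/normr0_eq0.
by apply: (psumr_eq0P _ S0) => // j _; exact: normr_ge0.
Qed.

Definition toc (x : Defs.C) : R[i] := Complex x.1 x.2.
Definition ofc (z : R[i]) : Defs.C := (complex.Re z, complex.Im z).

Lemma tocK : cancel ofc toc. Proof. by case. Qed.
Lemma toc_inj : injective toc. Proof. by move=> [a b] [c d] [-> ->]. Qed.
Lemma toc_add x y : toc (Cadd x y) = toc x + toc y.
Proof. by case: x y => [a b] [c d]. Qed.
Lemma toc_mul x y : toc (Cmul x y) = toc x * toc y.
Proof. by case: x y => [a b] [c d]. Qed.
Lemma toc_opp x : toc (Copp x) = - toc x. Proof. by case: x. Qed.

Lemma toc_sum r f : toc (Csum r f) = \sum_(l < r) toc (f l).
Proof. by elim: r => [|r IH]; rewrite ?big_ord0 // big_ord_recr /= toc_add IH. Qed.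

Lemma toc_std_basis a k : toc (std_basis a k) = (k == a)%:R.
Proof.
by rewrite /std_basis; case: (Nat.eqb_spec k a) => [->|/eqP/negbTE ->]; rewrite ?eqxx.
Qed.

Lemma normc_toc x : `|toc x| = (Cmod x)%:C%C.
Proof. by case: x => a b; rewrite normc_def /Cmod RsqrtE /= !expr2. Qed.

Definition ctensor (T : tensor) : nat -> nat -> nat -> R[i] :=
  fun a b c => toc (T a b c).

Lemma rank_leE da db dc T r :
  rank_le da db dc T r <-> tensor_rank_le da db dc (ctensor T) r.
Proof.
split=> [[x [y [z hT]]] | [x [y [z hT]]]].
  exists (fun l a => toc (x l a)), (fun l b => toc (y l b)), (fun l c => toc (z l c)).
  move=> a b c /ssrnat.ltP ha /ssrnat.ltP hb /ssrnat.ltP hc.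
  rewrite /ctensor hT // toc_sum.
  by apply: eq_bigr => l _; rewrite !toc_mul.
exists (fun l a => ofc (x l a)), (fun l b => ofc (y l b)), (fun l c => ofc (z l c)).
move=> a b c /ssrnat.ltP ha /ssrnat.ltP hb /ssrnat.ltP hc.
apply: toc_inj; rewrite toc_sum [LHS]hT //.
by apply: eq_bigr => l _; rewrite !toc_mul !tocK.
Qed.

Lemma rank_le_border_rank_le da db dc T r :
  rank_le da db dc T r -> border_rank_le da db dc T r.
Proof.
move=> hT; exists (fun _ => T); split=> // a b c _ _ _ eps eps_gt0; exists 0%N => m _.
have -> : Cadd (T a b c) (Copp (T a b c)) = Defs.C0.
  by apply: toc_inj; rewrite toc_add toc_opp subrr.
by rewrite /Cmod /= Rmult_0_l Rplus_0_l sqrt_0.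
Qed.

Lemma mu_hE n a b c : (b < n)%N -> ctensor (mu_h n) a b c = (c + b == a)%N%:R.
Proof.
move=> hb; rewrite /ctensor /mu_h /structure_tensor /hankel_vec_prod /hankel.
rewrite toc_sum (bigD1 (Ordinal hb)) //= big1 ?addr0.
  by rewrite toc_mul !toc_std_basis eqxx mulr1.
move=> j /eqP hj; rewrite toc_mul !toc_std_basis.
suff /negbTE -> : (nat_of_ord j != b) by rewrite mulr0.
by apply/eqP => jb; apply: hj; apply: val_inj.
Qed.

Lemma mu_h_rank_le n : rank_le n.*2.+1 n.+1 n.+1 (mu_h n.+1) n.*2.+1.
Proof.
apply/rank_leE; have [w [t wt]] := vandermonde_interpolation R[i] n.*2.
exists w, (fun l b => t l ^+ b), (fun l c => t l ^+ c) => a b c ha hb hc.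
by rewrite mu_hE // addnC wt //; lia.
Qed.

Lemma Nat_div_modE c n :
  (0 < n)%N -> Nat.div c n = (c %/ n)%N /\ Nat.modulo c n = (c %% n)%N.
Proof.
move=> n_gt0; have c_eq : c = (n * (c %/ n) + c %% n)%coq_nat.
  by rewrite {1}(divn_eq c n) mulnC.
have /ssrnat.ltP mod_lt : (c %% n < n)%N by rewrite ltn_mod.
by split; symmetry; [apply: Nat.div_unique c_eq | apply: Nat.mod_unique c_eq].
Qed.

Lemma mu_HE n a b c : (0 < n)%N ->
  ctensor (mu_H n) a b c =
  \sum_(l < n) (c %/ n + l == a)%N%:R * (l + c %% n == b)%N%:R.
Proof.
move=> n_gt0; rewrite /ctensor /mu_H /structure_tensor /hankel_mat_prod /hankel.
have [-> ->] := Nat_div_modE c n_gt0; rewrite toc_sum.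
by apply: eq_bigr => l _; rewrite toc_mul !toc_std_basis.
Qed.

Lemma hankel_window_sum (F : nzRingType) n i j a b :
  \sum_(l < n) (i + l == a)%N%:R * (l + j == b)%N%:R =
  (if (i <= a < i + n)%N then (a - i + j == b)%N%:R else 0 : F).
Proof.
case: ifP => [/andP[ia ai] | window].
  have ai_lt : (a - i < n)%N by lia.
  rewrite (bigD1 (Ordinal ai_lt)) //= subnKC // eqxx mul1r big1 ?addr0 //.
  move=> l /eqP hl; suff /negbTE -> : (i + l != a)%N by rewrite mul0r.
  by apply/eqP => il; apply: hl; apply: val_inj => /=; lia.
apply: big1 => l _; suff /negbTE -> : (i + l != a)%N by rewrite mul0r.
by apply/eqP => il; move: window (ltn_ord l); rewrite -il; lia.
Qed.

Lemma mu_H_block_rank_le n (i : nat) :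
  tensor_rank_le n.*2.+1 n.*2.+1 (n.+1 * n.+1)
    (fun a b c => (c %/ n.+1 == i)%N%:R *
       (if (i <= a < i + n.+1)%N then (a - i + c %% n.+1 == b)%N%:R else 0 : R[i]))
    n.*2.+1.
Proof.
have [w [t wt]] := vandermonde_interpolation R[i] n.*2.
exists (fun p a => if (i <= a < i + n.+1)%N then t p ^+ (a - i)%N else 0), w,
  (fun p c => (c %/ n.+1 == i)%N%:R * t p ^+ (c %% n.+1)%N) => a b c ha hb hc.
case: ifP => window; last by rewrite mulr0 big1 // => p _; rewrite !mul0r.
have := ltn_pmod c (ltn0Sn n); case/andP: window => ia ai mod_lt.
rewrite -wt //; last by lia.
by rewrite mulr_sumr; apply: eq_bigr => p _; ring.
Qed.

Lemma mu_H_rank_le n :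
  rank_le n.*2.+1 n.*2.+1 (n.+1 * n.+1) (mu_H n.+1) (n.+1 * n.*2.+1).
Proof.
apply/rank_leE.
have [x [y [z hxyz]]] :=
  tensor_rank_le_sum (m := n.+1) (fun i _ => mu_H_block_rank_le n i).
exists x, y, z => a b c ha hb hc; rewrite -hxyz // mu_HE // hankel_window_sum.
have row_lt : (c %/ n.+1 < n.+1)%N by rewrite ltn_divLR.
rewrite (bigD1 (Ordinal row_lt)) //= eqxx mul1r big1 ?addr0 // => i /eqP hi.
suff /negbTE -> : (c %/ n.+1 != i)%N by rewrite mul0r.
by apply/eqP => ci; apply: hi; apply: val_inj; rewrite /= ci.
Qed.

Lemma eventually_forall_lt q (P : nat -> nat -> Prop) :
  (forall k, (k < q)%N -> exists M, forall m, (M <= m)%N -> P k m) ->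
  exists M, forall m, (M <= m)%N -> forall k, (k < q)%N -> P k m.
Proof.
elim: q => [|q IH] hP; first by exists 0%N.
have [M1 h1] := IH (fun k hk => hP k (ltnW hk)).
have [M2 h2] := hP q (ltnSn q).
exists (maxn M1 M2) => m; rewrite geq_max => /andP[m1 m2] k.
by rewrite ltnS leq_eqVlt => /orP[/eqP -> | hk]; [exact: h2 | exact: h1].
Qed.

Lemma mu_h_border_rank_ge n s :
  border_rank_le n.*2.+1 n.+1 n.+1 (mu_h n.+1) s -> (n.*2.+1 <= s)%coq_nat.
Proof.
move=> [Tm [Tm_rank Tm_cv]]; apply/ssrnat.leP.
pose beta k := minn k n; pose gamma k := (k - minn k n)%N.
have beta_lt k : (beta k < n.+1)%N by rewrite ltnS geq_minr.
have gamma_lt k : (k < n.*2.+1)%N -> (gamma k < n.+1)%N by rewrite /gamma; lia.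
have gamma_beta k : (gamma k + beta k)%N = k by rewrite subnK // geq_minl.
pose eps : R := (2 * n.*2.+1%:R)^-1.
have /RltP eps_gt0 : 0 < eps by rewrite /eps invr_gt0 mulr_gt0 // ltr0n.
have [M close] : exists M, forall m, (M <= m)%N ->
    forall a, (a < n.*2.+1)%N -> forall k, (k < n.*2.+1)%N ->
    Rlt (Cmod (Cadd (Tm m a (beta k) (gamma k))
                    (Copp (mu_h n.+1 a (beta k) (gamma k))))) eps.
  apply: eventually_forall_lt => a ha; apply: eventually_forall_lt => k hk.
  have [M0 HM0] := Tm_cv a (beta k) (gamma k) (ssrnat.ltP ha)
    (ssrnat.ltP (beta_lt k)) (ssrnat.ltP (gamma_lt k hk)) eps eps_gt0.
  by exists M0 => m hm; apply: HM0; apply/ssrnat.leP.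
pose A := \matrix_(a < n.*2.+1, k < n.*2.+1) ctensor (Tm M) a (beta k) (gamma k).
have /eqP <- : row_free A.
  apply: near_identity_row_free => a k; rewrite mxE.
  have -> : (a == k)%:R = ctensor (mu_h n.+1) a (beta k) (gamma k).
    by rewrite mu_hE // gamma_beta eq_sym.
  have -> : (2 * n.*2.+1%:R)^-1 = eps%:C%C by rewrite fmorphV rmorphM !rmorph_nat.
  rewrite /ctensor -toc_opp -toc_add normc_toc lecR.
  by apply/ltW/RltP/close.
apply: tensor_rank_le_flattening
  (fun k => beta_lt k) (fun k => gamma_lt k (ltn_ord k)) _.
exact/rank_leE/Tm_rank.
Qed.

Lemma hankel_dim n : (2 * n.+1 - 1)%coq_nat = n.*2.+1.
Proof. lia. Qed.

End HankelRank.

Theorem mainTheorem11 (n : nat) (hn : (1 <= n)%nat) :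
  is_rank (2 * n - 1) n n (mu_h n) (2 * n - 1) /\
  is_border_rank (2 * n - 1) n n (mu_h n) (2 * n - 1) /\
  rank_le (2 * n - 1) (2 * n - 1) (n * n) (mu_H n) (n * (2 * n - 1)).
Proof.
  destruct n as [|n]; [inversion hn|].
  rewrite HankelRank.hankel_dim.
  pose proof (HankelRank.mu_h_rank_le n) as upper.
  pose proof (@HankelRank.mu_h_border_rank_ge n) as lower.
  split; [split | split; [split |]].
  - exact upper.
  - intros s Hs. apply lower, HankelRank.rank_le_border_rank_le, Hs.
  - apply HankelRank.rank_le_border_rank_le, upper.
  - exact lower.
  - exact (HankelRank.mu_H_rank_le n).
Qed.
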